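(* Fix a class $n$ and let $\bar\rho\equiv\sum_{m\ne n}\frac{r_m}{C_m}$. If $\bar\rho<1$, then the system is a Guaranteed Rate server to class $n$ with rate $R_n=(1-\bar\rho)C_n$ and error term $E_n=\sum_{m\neq n}\frac{\sigma_m}{(1-\bar\rho)C_m}$; i.e., for every packet $p^{f_n,i}$ of class $n$, $d^{f_n,i}\le GRC^{f_n,i}(R_n)+E_n$.
   Context: A multiclass FIFO system serves packets from $N$ classes (flows $f_1,\dots,f_N$). Class $m$ has constant service rate $C_m>0$. All packets, indexed in order of arrival (ties broken arbitrarily) as $p^{g,1},p^{g,2},\dots$ with arrival times $0\le a^{g,1}\le\cdots$ and lengths $l^{g,j}>0$, depart at $d^{g,j}=\max\{a^{g,j},d^{g,j-1}\}+l^{g,j}/C_{c(j)}$, $d^{g,0}=0$, $c(j)$ the class of $p^{g,j}$. The $i$-th packet of class $n$ is $p^{f_n,i}$ with arrival time $a^{f_n,i}$, departure time $d^{f_n,i}$, length $l^{f_n,i}$. $A_m(s,t)$ is the total length of class-$m$ packets arriving in $[s,t]$; each class satisfies $A_m(s,t)\le r_m(t-s)+\sigma_m$ for all $0\le s\le t$, with $r_m,\sigma_m\ge0$. The guaranteed rate clock for class $n$ with rate $R$ is $GRC^{f_n,0}=0$, $GRC^{f_n,i}(R)=\max\{a^{f_n,i},GRC^{f_n,i-1}(R)\}+l^{f_n,i}/R$. *)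

From HB Require Import structures.
From mathcomp Require Import all_boot all_order all_algebra.
Set Implicit Arguments. Unset Strict Implicit. Unset Printing Implicit Defensive.
Import Order.TTheory GRing.Theory Num.Theory.
Local Open Scope ring_scope.

(* Packets are indexed globally in arrival order by j = 0,1,...,K-1
   (paper's p^{g,j+1}).  Packet j has arrival time a j, length l j and
   class cls j : 'I_N.  C m is the service rate of class m. *)

(* dep_aux ... j = d^{g,j}, with dep_aux ... 0 = d^{g,0} = 0.
   The departure time of packet j (0-based) is dep_aux ... j.+1. *)
Fixpoint dep_aux (R : realFieldType) (N : nat) (C : 'I_N -> R)
    (a l : nat -> R) (cls : nat -> 'I_N) (j : nat) : R :=
  match j with
  | 0 => 0
  | j'.+1 => Num.max (a j') (dep_aux C a l cls j') + l j' / C (cls j')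
  end.

Definition dep (R : realFieldType) (N : nat) (C : 'I_N -> R)
    (a l : nat -> R) (cls : nat -> 'I_N) (j : nat) : R :=
  dep_aux C a l cls j.+1.

(* grc_aux ... j = GRC of the last class-n packet among packets 0..j-1
   (or GRC^{f_n,0} = 0 if there is none).  The guaranteed rate clock
   GRC^{f_n,i}(Rate) of a class-n packet with global index j is
   grc_aux ... j.+1. *)
Fixpoint grc_aux (R : realFieldType) (N : nat) (n : 'I_N) (Rate : R)
    (a l : nat -> R) (cls : nat -> 'I_N) (j : nat) : R :=
  match j with
  | 0 => 0
  | j'.+1 =>
      if cls j' == n
      then Num.max (a j') (grc_aux n Rate a l cls j') + l j' / Rate
      else grc_aux n Rate a l cls j'
  end.

Definition grc (R : realFieldType) (N : nat) (n : 'I_N) (Rate : R)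
    (a l : nat -> R) (cls : nat -> 'I_N) (j : nat) : R :=
  grc_aux n Rate a l cls j.+1.

Definition arr (R : realFieldType) (N : nat) (K : nat)
    (a l : nat -> R) (cls : nat -> 'I_N) (m : 'I_N) (s t : R) : R :=
  \sum_(j < K | (cls j == m) && (s <= a j <= t)) l j.

From HB Require Import structures.
From mathcomp Require Import all_boot all_order all_algebra.
From mathcomp Require Import ring lra.
Import Order.TTheory GRing.Theory Num.Theory.
Local Open Scope ring_scope.

(* Fix a class-n packet j.
   - The FIFO recursion unrolls back to the start k <= j of the busy period
     containing j: d_j = a_k + X, where X = sum_{k<=i<=j} l_i / C_{c(i)}
     is the work served in that busy period.
   - Grouping X by classes, X = sum_m T_m / C_m, where T_m is the class-m
     traffic of packets k..j.  These packets all arrive in [a_k, a_j], and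
     a_j <= d_j, so for m <> n the envelope gives T_m <= r_m X + sigma_m.
   - Hence X <= T_n / C_n + rho X + sum_{m<>n} sigma_m / C_m; since rho < 1
     this solves to X <= T_n / R_n + E_n with R_n = (1 - rho) C_n.
   - Finally the guaranteed rate clock dominates a_k + T_n / R_n, as it
     serves at least the class-n work of packets k..j, started no earlier
     than a_k.  Together: d_j = a_k + X <= GRC_j + E_n. *)

Lemma arrivals_nondecreasing {R : realFieldType} {K : nat} {a : nat -> R} :
  (forall j, (j.+1 < K)%N -> a j <= a j.+1) ->
  forall i j, (i <= j)%N -> (j < K)%N -> a i <= a j.
Proof.
move=> a_step i j le_ij lt_jK.
have lt_iK : (i < K)%N by exact: leq_ltn_trans le_ij lt_jK.
apply: (@homo_leq_in _ [pred i | i < K]%N a (fun x y => x <= y)) => //=.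
- by move=> x y z; apply: le_trans.
- by move=> x y _ y_lt z /andP[_ lt_zy]; exact: ltn_trans lt_zy y_lt.
- by move=> x _ /a_step.
Qed.

Section FifoSystem.

Context {R : realFieldType} {N : nat} (C : 'I_N -> R).
Context (a l : nat -> R) (cls : nat -> 'I_N).

Lemma dep_busy_period j : 0 <= a 0%N ->
  exists2 k, (k <= j)%N &
    dep C a l cls j = a k + \sum_(k <= i < j.+1) l i / C (cls i).
Proof.
move=> a0_ge0; elim: j => [|j [k le_kj IH]].
  by exists 0%N => //; rewrite /dep big_nat1 /= (max_idPl a0_ge0).
rewrite /dep in IH *.
have -> : dep_aux C a l cls j.+2
  = Num.max (a j.+1) (dep_aux C a l cls j.+1) + l j.+1 / C (cls j.+1) by [].
rewrite IH.
case: leP => _.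
  by exists k; [exact: leqW le_kj | rewrite (big_nat_recr _ _ _ (leqW le_kj)) addrA].
by exists j.+1 => //; rewrite big_nat1.
Qed.

Lemma arrival_le_dep j : 0 <= l j / C (cls j) -> a j <= dep C a l cls j.
Proof.
move=> serv_ge0; rewrite /dep /=.
by apply: ler_wpDr serv_ge0 _; rewrite le_max lexx.
Qed.

Lemma work_by_class k j :
  \sum_(k <= i < j) l i / C (cls i)
  = \sum_(m < N) (\sum_(k <= i < j | cls i == m) l i) / C m.
Proof.
rewrite (partition_big cls predT) //=; apply: eq_bigr => m _.
by rewrite big_distrl /=; apply: eq_bigr => i /eqP ->.
Qed.

End FifoSystem.

Section ArrivalCurve.

Context {R : realFieldType} {N K : nat} {a l : nat -> R} {cls : nat -> 'I_N}.
Hypothesis l_ge0 : forall j, (j < K)%N -> 0 <= l j.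
Hypothesis a_step : forall j, (j.+1 < K)%N -> a j <= a j.+1.

Lemma range_traffic_le_arr m k j : (k <= j)%N -> (j < K)%N ->
  \sum_(k <= i < j.+1 | cls i == m) l i <= arr K a l cls m (a k) (a j).
Proof.
move=> le_kj lt_jK.
pose in_window i := (cls i == m) && (a k <= a i <= a j).
have window_ge0 p q : (q <= K)%N -> 0 <= \sum_(p <= i < q | in_window i) l i.
  move=> le_qK; rewrite big_nat_cond; apply: sumr_ge0 => i /andP[/andP[_ lt_iq] _].
  by apply: l_ge0; exact: leq_trans lt_iq le_qK.
have le_kK : (k <= K)%N by exact: leq_trans le_kj (ltnW lt_jK).
have same_packets : \sum_(k <= i < j.+1 | cls i == m) l i
    = \sum_(k <= i < j.+1 | in_window i) l i.
  rewrite big_nat_cond [RHS]big_nat_cond; apply: eq_bigl => i.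
  case: (boolP (k <= i < j.+1)%N) => //= /andP[le_ki lt_ij1]; rewrite /in_window.
  have lt_iK : (i < K)%N by exact: leq_trans lt_ij1 lt_jK.
  by rewrite !(arrivals_nondecreasing a_step) ?andbT.
rewrite same_packets /arr -(big_mkord in_window l) (big_cat_nat (leq0n k) le_kK).
rewrite (big_cat_nat (leqW le_kj) lt_jK) /= addrCA.
by apply: ler_wpDr; rewrite ?addr_ge0 ?window_ge0.
Qed.

End ArrivalCurve.

Section GuaranteedRateClock.

Context {R : realFieldType} {N : nat} (n : 'I_N) (Rt : R).
Context (a l : nat -> R) (cls : nat -> 'I_N).

Lemma arrival_le_grc j : cls j = n -> 0 <= l j / Rt -> a j <= grc n Rt a l cls j.
Proof.
move=> cls_j serv_ge0; rewrite /grc /= cls_j eqxx.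
by apply: ler_wpDr serv_ge0 _; rewrite le_max lexx.
Qed.

(* The clock after packets 0..j-1 is at least a_k plus the class-n work of
   packets k..j-1 served at rate Rt; the maximum with a_k covers the case
   where no class-n packet arrived since k. *)
Lemma grc_busy_bound {K : nat} :
  (forall j, (j.+1 < K)%N -> a j <= a j.+1) ->
  forall k j, (k <= j)%N -> (j <= K)%N ->
  a k + (\sum_(k <= i < j | cls i == n) l i) / Rt
    <= Num.max (a k) (grc_aux n Rt a l cls j).
Proof.
move=> a_step k; elim=> [|j IH] le_kj le_jK.
  by rewrite leqn0 in le_kj; rewrite (eqP le_kj) big_geq // mul0r addr0 le_max lexx.
case: (ltngtP k j.+1) le_kj => // [lt_kj1 _|-> _]; last first.
  by rewrite big_geq // mul0r addr0 le_max lexx.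
rewrite big_mkcond big_nat_recr //= -big_mkcond /=.
case: ifP => [cls_j|_]; last by rewrite addr0 IH // ltnW.
have le_akaj : a k <= a j by exact: arrivals_nondecreasing a_step k j lt_kj1 le_jK.
rewrite mulrDl addrA le_max lerD2r; apply/orP; right.
apply: le_trans (IH lt_kj1 (ltnW le_jK)) _.
by rewrite ge_max !le_max le_akaj lexx !orbT.
Qed.

End GuaranteedRateClock.

Lemma busy_work_bound {R : realFieldType} {N : nat} {C r sigma T : 'I_N -> R}
    {n : 'I_N} {X : R} :
  (forall m, 0 < C m) ->
  let rho := \sum_(m < N | m != n) r m / C m in
  rho < 1 ->
  X = \sum_(m < N) T m / C m ->
  (forall m, m != n -> T m <= r m * X + sigma m) ->
  X <= T n / ((1 - rho) * C n)
       + \sum_(m < N | m != n) sigma m / ((1 - rho) * C m).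
Proof.
move=> C_gt0 rho rho_lt1 X_def T_le.
have rho'_gt0 : 0 < 1 - rho by rewrite subr_gt0.
have others_le : \sum_(m < N | m != n) T m / C m
    <= rho * X + \sum_(m < N | m != n) sigma m / C m.
  rewrite /rho mulr_suml -big_split /=; apply: ler_sum => m ne_mn.
  rewrite mulrAC -mulrDl; apply: ler_wpM2r; [by rewrite invr_ge0 ltW | exact: T_le].
rewrite -(ler_pM2l rho'_gt0) mulrDr mulr_sumr.
have -> : (1 - rho) * (T n / ((1 - rho) * C n)) = T n / C n.
  by field; rewrite !lt0r_neq0.
have -> : \sum_(m < N | m != n) (1 - rho) * (sigma m / ((1 - rho) * C m))
    = \sum_(m < N | m != n) sigma m / C m.
  by apply: eq_bigr => m _; field; rewrite !lt0r_neq0.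
have X_split : X = T n / C n + \sum_(m < N | m != n) T m / C m.
  by rewrite X_def (bigD1 n).
move: others_le X_split; lra.
Qed.

Theorem theorem3 (R : realFieldType) (N : nat) (C r sigma : 'I_N -> R)
    (K : nat) (a l : nat -> R) (cls : nat -> 'I_N) (n : 'I_N) :
  (forall m, 0 < C m) ->
  (forall m, 0 <= r m) ->
  (forall m, 0 <= sigma m) ->
  (forall j, (j < K)%N -> 0 < l j) ->
  0 <= a 0%N ->
  (forall j, (j.+1 < K)%N -> a j <= a j.+1) ->
  (forall m s t, 0 <= s -> s <= t ->
     arr K a l cls m s t <= r m * (t - s) + sigma m) ->
  let rho := \sum_(m < N | m != n) r m / C m in
  rho < 1 ->
  forall j, (j < K)%N -> cls j = n ->
    dep C a l cls j <=
      grc n ((1 - rho) * C n) a l cls j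
      + \sum_(m < N | m != n) sigma m / ((1 - rho) * C m).
Proof.
move=> C_gt0 r_ge0 _ l_gt0 a0_ge0 a_step envelope rho rho_lt1 j lt_jK cls_j.
have l_ge0 i : (i < K)%N -> 0 <= l i by move/l_gt0/ltW.
have [k le_kj dep_j] := dep_busy_period C a l cls j a0_ge0.
set X := \sum_(k <= i < j.+1) _ in dep_j.
set T := fun m => \sum_(k <= i < j.+1 | cls i == m) l i.
have le_ak_aj : a k <= a j by exact: arrivals_nondecreasing a_step k j le_kj lt_jK.
have ak_ge0 : 0 <= a k.
  apply: le_trans a0_ge0 _.
  exact: arrivals_nondecreasing a_step 0%N k (leq0n k) (leq_ltn_trans le_kj lt_jK).
have window_le_X : a j - a k <= X.
  have := arrival_le_dep C a l cls j (divr_ge0 (l_ge0 _ lt_jK) (ltW (C_gt0 _))).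
  by rewrite dep_j; lra.
have T_le m : m != n -> T m <= r m * X + sigma m.
  move=> _; apply: le_trans (range_traffic_le_arr l_ge0 a_step m k j le_kj lt_jK) _.
  by apply: le_trans (envelope _ _ _ ak_ge0 le_ak_aj) _; rewrite lerD2r ler_wpM2l.
set Rt := (1 - rho) * C n.
have X_le : X <= T n / Rt + \sum_(m < N | m != n) sigma m / ((1 - rho) * C m).
  exact: busy_work_bound C_gt0 rho_lt1 (work_by_class C l cls k j.+1) T_le.
have serv_ge0 : 0 <= l j / Rt by rewrite divr_ge0 ?ltW ?mulr_gt0 ?subr_gt0 ?l_gt0.
have grc_ge : a k + T n / Rt <= grc n Rt a l cls j.
  have := grc_busy_bound n Rt a l cls a_step k j.+1 (leqW le_kj) lt_jK.
  rewrite (max_idPr _) //; apply: le_trans le_ak_aj _; exact: arrival_le_grc.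
rewrite dep_j; move: X_le grc_ge; lra.
Qed.
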